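(* Let $(Q,\cdot)$ be a quadratical quasigroup and $a,b\in Q$ distinct. Then for every integer $t>1$ and every $k\in\{1,2,3,4\}$, $aba\cdot tk=(t-1)k$.
   Context: A quadratical quasigroup is a quasigroup satisfying $xy\cdot x=zx\cdot yz$ (equivalently, a groupoid satisfying $x\cdot x=x$, $yx\cdot xy=x$, $xy\cdot zw=xz\cdot yw$). $aba$ denotes $ab\cdot a$. The elements $tk$ are defined by $11=a$, $12=ab$, $13=ba$, $14=b$ and, for $n\ge2$, $n1=(n-1)1\cdot(n-1)2$, $n2=(n-1)2\cdot(n-1)4$, $n3=(n-1)3\cdot(n-1)1$, $n4=(n-1)4\cdot(n-1)3$. *)

From Stdlib Require Import Arith.

Definition is_quasigroup {Q : Type} (mul : Q -> Q -> Q) : Prop :=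
  (forall a b : Q, exists! x : Q, mul a x = b) /\
  (forall a b : Q, exists! y : Q, mul y a = b).

Definition quadratical {Q : Type} (mul : Q -> Q -> Q) : Prop :=
  is_quasigroup mul /\
  forall x y z : Q, mul (mul x y) x = mul (mul z x) (mul y z).

(* The elements tk: elt mul a b t = (t1, t2, t3, t4) where
   t = n.+1 (so elt ... 0 gives the row "1"). *)
Fixpoint elt_row {Q : Type} (mul : Q -> Q -> Q) (a b : Q) (n : nat)
  : Q * Q * Q * Q :=
  match n with
  | O => (a, mul a b, mul b a, b)
  | S m =>
      let '(x1, x2, x3, x4) := elt_row mul a b m in
      (mul x1 x2, mul x2 x4, mul x3 x1, mul x4 x3)
  end.

(* tk for t >= 1 and k in {1,2,3,4}; (t, k) outside that range is junk. *)
Definition tk {Q : Type} (mul : Q -> Q -> Q) (a b : Q) (t k : nat) : Q :=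
  let '(x1, x2, x3, x4) := elt_row mul a b (t - 1) in
  match k with
  | 1 => x1
  | 2 => x2
  | 3 => x3
  | _ => x4
  end.

(* In a quadratical quasigroup every left translation [L_c : x |-> c x] is an
   endomorphism, because quadratical quasigroups are idempotent and left
   distributive.  The rows [tk] are produced from the first row by the same
   binary recipe at every step, so an endomorphism carrying row 2 onto row 1
   carries row t onto row t-1 for every t.  For c = aba this first step is a
   short computation with idempotency, flexibility, the identity yx.xy = x and
   both distributive laws. *)

From Stdlib Require Import Arith Lia.

Lemma quasigroup_cancel_l {Q : Type} (mul : Q -> Q -> Q) :
  is_quasigroup mul -> forall a x y, mul a x = mul a y -> x = y.
Proof.
  intros [Hl _] a x y Hxy.
  destruct (Hl a (mul a y)) as [w [_ Hw]].
  rewrite <- (Hw x Hxy); exact (Hw y eq_refl).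
Qed.

Section Quadratical.

Context {Q : Type} (mul : Q -> Q -> Q).
Hypothesis Hq : quadratical mul.

Local Notation "x ∙ y" := (mul x y) (at level 40, left associativity).

Lemma quadraticalE x y z : (z ∙ x) ∙ (y ∙ z) = (x ∙ y) ∙ x.
Proof. symmetry; apply (proj2 Hq). Qed.

Lemma mul_idem x : x ∙ x = x.
Proof.
  apply (quasigroup_cancel_l mul (proj1 Hq) (x ∙ x)).
  apply quadraticalE.
Qed.

Lemma mul_flex x y : x ∙ (y ∙ x) = (x ∙ y) ∙ x.
Proof. rewrite <- (quadraticalE x y x), mul_idem; reflexivity. Qed.

Lemma mul_flex_sym x y : (x ∙ y) ∙ x = (y ∙ x) ∙ y.
Proof. rewrite <- (quadraticalE x y y), mul_idem; reflexivity. Qed.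

Lemma mul_swapped_pair x y : (y ∙ x) ∙ (x ∙ y) = x.
Proof. rewrite quadraticalE, !mul_idem; reflexivity. Qed.

Lemma quadratical_opp : quadratical (fun x y => y ∙ x).
Proof.
  destruct Hq as [[Hl Hr] _]; split; [split; assumption |].
  intros x y z; rewrite quadraticalE, mul_flex, mul_flex_sym; reflexivity.
Qed.

(* Writing a = c w, the quadratical identity turns both sides into b w b, using a c = w a. *)
Lemma mul_distl a b c : a ∙ (b ∙ c) = (a ∙ b) ∙ (a ∙ c).
Proof.
  destruct (proj1 (proj1 Hq) c a) as [w [Hw _]]; subst a.
  assert (Hcwc : (c ∙ w) ∙ c = w ∙ (c ∙ w)).
  { rewrite mul_flex, mul_flex_sym; reflexivity. }
  rewrite Hcwc, quadraticalE, quadraticalE, mul_flex_sym; reflexivity.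
Qed.

End Quadratical.

Lemma mul_distr {Q : Type} (mul : Q -> Q -> Q) :
  quadratical mul -> forall a b c, mul (mul b c) a = mul (mul b a) (mul c a).
Proof. intros Hq a b c; exact (mul_distl _ (quadratical_opp mul Hq) a c b). Qed.

Section Rows.

Context {Q : Type} (mul : Q -> Q -> Q).

Definition row_step (r : Q * Q * Q * Q) : Q * Q * Q * Q :=
  let '(x1, x2, x3, x4) := r in (mul x1 x2, mul x2 x4, mul x3 x1, mul x4 x3).

Definition row_map (f : Q -> Q) (r : Q * Q * Q * Q) : Q * Q * Q * Q :=
  let '(x1, x2, x3, x4) := r in (f x1, f x2, f x3, f x4).

(* Junk indices [k] select the fourth entry, exactly as [tk] does. *)
Definition row_get (r : Q * Q * Q * Q) (k : nat) : Q :=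
  let '(x1, x2, x3, x4) := r in
  match k with 1 => x1 | 2 => x2 | 3 => x3 | _ => x4 end.

Lemma elt_row_succ a b n : elt_row mul a b (S n) = row_step (elt_row mul a b n).
Proof. reflexivity. Qed.

Lemma tk_row_get a b t k : tk mul a b t k = row_get (elt_row mul a b (t - 1)) k.
Proof. reflexivity. Qed.

Lemma row_get_map f r k : row_get (row_map f r) k = f (row_get r k).
Proof. destruct r as [[[x1 x2] x3] x4]; destruct k as [|[|[|[|k]]]]; reflexivity. Qed.

Section Endomorphism.

Variable f : Q -> Q.
Hypothesis f_mul : forall x y, f (mul x y) = mul (f x) (f y).

Lemma row_map_step r : row_map f (row_step r) = row_step (row_map f r).
Proof. destruct r as [[[x1 x2] x3] x4]; simpl; rewrite !f_mul; reflexivity. Qed.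

Lemma elt_row_shift a b :
  row_map f (elt_row mul a b 1) = elt_row mul a b 0 ->
  forall n, row_map f (elt_row mul a b (S n)) = elt_row mul a b n.
Proof.
  intros H0 n; induction n as [|n IH]; [exact H0 |].
  rewrite elt_row_succ, row_map_step, IH; reflexivity.
Qed.

End Endomorphism.

End Rows.

Lemma aba_row2_to_row1 {Q : Type} (mul : Q -> Q -> Q) (a b : Q) :
  quadratical mul ->
  row_map (mul (mul (mul a b) a)) (elt_row mul a b 1) = elt_row mul a b 0.
Proof.
  intros Hq.
  pose proof (mul_idem mul Hq) as idem.
  pose proof (mul_flex mul Hq) as flex.
  pose proof (mul_swapped_pair mul Hq) as swapped.
  pose proof (mul_distl mul Hq) as distl.
  pose proof (mul_distr mul Hq) as distr.
  simpl; f_equal; [f_equal; [f_equal |] |].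
  - rewrite <- flex, <- distl, swapped, idem; reflexivity.
  - rewrite <- distl, idem; reflexivity.
  - rewrite <- distr, swapped; reflexivity.
  - rewrite <- flex, <- distr, swapped; reflexivity.
Qed.

Theorem proposition3p6 (Q : Type) (mul : Q -> Q -> Q) (a b : Q) :
  quadratical mul -> a <> b ->
  forall t k : nat, 1 < t -> 1 <= k <= 4 ->
  mul (mul (mul a b) a) (tk mul a b t k) = tk mul a b (t - 1) k.
Proof.
  intros Hq _ t k Ht _.
  rewrite !tk_row_get, <- row_get_map.
  replace (t - 1 - 1) with (t - 2) by lia.
  replace (t - 1) with (S (t - 2)) by lia.
  rewrite (elt_row_shift mul _ (mul_distl mul Hq _) a b (aba_row2_to_row1 mul a b Hq)).
  reflexivity.
Qed.
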